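(* Let $R$ be a commutative ring and $Q$ an ordered quiver with vertex set $Q_0=\{1,\dots,n\}$. Let $\Lambda$ be the incidence $R$-algebra of $Q$, regarded as the $R$-subalgebra $\Lambda=\bigoplus_{a\ge b}R\,E_{ba}\subseteq\mathrm{M}_n(R)$. Then $H^i(\Lambda,\mathrm{M}_n(R)/\Lambda)=0$ for all $i\ge 0$.
   Context: A finite quiver $Q$ without oriented cycles is ordered if for each arrow $\alpha$ there is no oriented path other than $\alpha$ from the tail $t(\alpha)$ to the head $h(\alpha)$. On $Q_0$ set $a\ge b$ if $a=b$ or there is an oriented path from $a$ to $b$; this is a partial order. The incidence algebra is $RQ/I$ where $I$ is generated by differences of oriented paths with the same head and tail; it is $R$-free with basis the classes $e_{ba}$ ($a\ge b$) of paths from $a$ to $b$, and $e_{ba}\mapsto E_{ba}$ (matrix unit) identifies it with $\bigoplus_{a\ge b}RE_{ba}\subseteq\mathrm{M}_n(R)$. $H^i$ is Hochschild cohomology ($\mathrm{Ext}$ over $\Lambda\otimes_R\Lambda^{op}$), with $\mathrm{M}_n(R)/\Lambda$ a $\Lambda$-bimodule via matrix multiplication. *)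

From HB Require Import structures.
From mathcomp Require Import all_boot all_order all_algebra.
Set Implicit Arguments. Unset Strict Implicit. Unset Printing Implicit Defensive.
Import GRing.Theory.
Local Open Scope ring_scope.

(* A finite quiver with vertex set 'I_n (= {1,...,n} relabelled 0..n-1),
   finite arrow type Ar, tail map tl and head map hd. *)
Section Quiver.
Variables (n : nat) (Ar : finType) (tl hd : Ar -> 'I_n).

Fixpoint apath (x : 'I_n) (p : seq Ar) (y : 'I_n) : bool :=
  match p with
  | [::] => x == y
  | a :: p' => (tl a == x) && apath (hd a) p' y
  end.

Definition no_oriented_cycles : Prop :=
  forall (x : 'I_n) (p : seq Ar), apath x p x -> p = [::].

Definition ordered_quiver : Prop :=
  no_oriented_cycles /\
  forall (a : Ar) (p : seq Ar), apath (tl a) p (hd a) -> p = [:: a].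

Definition arrow_rel : rel 'I_n :=
  fun x y => [exists a, (tl a == x) && (hd a == y)].

Definition qge (a b : 'I_n) : bool := connect arrow_rel a b.

End Quiver.

Section Incidence.
Variables (R : comPzRingType) (n : nat) (Ar : finType) (tl hd : Ar -> 'I_n).
Local Notation ge := (qge tl hd).

Definition inLam (A : 'M[R]_n) : bool :=
  [forall b : 'I_n, forall a : 'I_n, (~~ ge a b) ==> (A b a == 0)].

(* The quotient M_n(R)/Lambda, represented by its canonical complement
   (+)_{not a >= b} R E_{ba}; proj is the quotient map. *)
Definition projQ (A : 'M[R]_n) : 'M[R]_n :=
  \matrix_(b, a) (if ge a b then 0 else A b a).

Definition inQ (A : 'M[R]_n) : bool := projQ A == A.

Definition actl (l m : 'M[R]_n) : 'M[R]_n := projQ (l *m m).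
Definition actr (m l : 'M[R]_n) : 'M[R]_n := projQ (m *m l).

(* Hochschild cochains of degree k: R-multilinear maps Lambda^k -> M_n(R)/Lambda,
   represented as functions on lists of matrices (only values on lists of
   length k with entries in Lambda matter). *)
Definition cochain (k : nat) (f : seq 'M[R]_n -> 'M[R]_n) : Prop :=
  (forall s, size s = k -> all inLam s -> inQ (f s)) /\
  (forall s1 s2 (x y : 'M[R]_n) (c : R),
      (size s1 + size s2).+1 = k -> all inLam s1 -> all inLam s2 ->
      inLam x -> inLam y ->
      f (s1 ++ (c *: x + y) :: s2) = c *: f (s1 ++ x :: s2) + f (s1 ++ y :: s2)).

Definition mergeAt (j : nat) (s : seq 'M[R]_n) : seq 'M[R]_n :=
  take j s ++ (nth 0 s j *m nth 0 s j.+1) :: drop j.+2 s.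

(* Hochschild differential C^k -> C^(k+1), evaluated on s of length k+1 *)
Definition hdiff (k : nat) (f : seq 'M[R]_n -> 'M[R]_n) (s : seq 'M[R]_n)
  : 'M[R]_n :=
  actl (nth 0 s 0) (f (behead s))
  + \sum_(j < k) (-1) ^+ j.+1 *: f (mergeAt j s)
  + (-1) ^+ k.+1 *: actr (f (take k s)) (nth 0 s k).

Definition cocycle (k : nat) f : Prop :=
  forall s, size s = k.+1 -> all inLam s -> hdiff k f s = 0.

Definition coboundary (k : nat) f : Prop :=
  match k with
  | 0 => forall s, size s = 0 -> f s = 0
  | k'.+1 => exists g, cochain k' g /\
      forall s, size s = k -> all inLam s -> f s = hdiff k' g s
  end.

Definition HH_vanishes (k : nat) : Prop :=
  forall f, cochain k f -> cocycle k f -> coboundary k f.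

End Incidence.

From HB Require Import structures.
From mathcomp Require Import all_boot all_order all_algebra ring zify.
Set Implicit Arguments. Unset Strict Implicit. Unset Printing Implicit Defensive.
Import GRing.Theory.
Local Open Scope ring_scope.

(* Lambda contains the diagonal idempotents E_c = E_cc, which sum to 1.  The
   proof compares the Hochschild complex with the subcomplex of cochains that
   are balanced over S = (+)_c R E_c (the S-relative complex):
   - every "S-balanced" value  E_c0 f(E_c0 x1 E_c1, ..., E_c(m-1) xm E_cm) E_cm
     vanishes in N = M_n(R)/Lambda: the factors are nonzero only along a chain
     c_m >= ... >= c_0, and then the (c_0, c_m) entry of N is zero
     (corner_vanishes, balanced_vanishes);
   - an explicit contracting homotopy [htp] built from the E_c satisfies
     d h + h d = -(balanced part) on the right part of the differential
     (homotopy_identity); adding the left action term back, every cocycle f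
     of positive degree equals d (hcochain f) (cocycle_is_coboundary).
   Degree 0 is the same corner argument. *)

Ltac entrywise_ring := apply/matrixP => ? ?; rewrite !mxE; ring.

Lemma projQ_is_linear (R : comPzRingType) (n : nat) (Ar : finType)
    (tl hd : Ar -> 'I_n) : linear (@projQ R n Ar tl hd).
Proof.
move=> a A B; apply/matrixP => b c; rewrite !mxE; case: ifP => _ //.
by rewrite mulr0 addr0.
Qed.

HB.instance Definition _ (R : comPzRingType) (n : nat) (Ar : finType)
    (tl hd : Ar -> 'I_n) :=
  GRing.isLinear.Build R 'M[R]_n 'M[R]_n _ (@projQ R n Ar tl hd)
    (projQ_is_linear tl hd).

Section IncidenceAlgebra.
Variables (R : comPzRingType) (n : nat) (Ar : finType) (tl hd : Ar -> 'I_n).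
Local Notation M := 'M[R]_n.
Local Notation ge := (qge tl hd).
Local Notation inL := (@inLam R n Ar tl hd).
Local Notation pQ := (@projQ R n Ar tl hd).
Local Notation al := (@actl R n Ar tl hd).
Local Notation ar := (@actr R n Ar tl hd).

Lemma ge_refl a : ge a a.
Proof. exact: connect0. Qed.

Lemma ge_trans a b c : ge a b -> ge b c -> ge a c.
Proof. exact: connect_trans. Qed.

Lemma inLamP (A : M) : reflect (forall b a, ~~ ge a b -> A b a = 0) (inL A).
Proof.
apply: (iffP forallP) => [H b a nab|H b].
  by move: (H b) => /forallP /(_ a) /implyP /(_ nab) /eqP.
by apply/forallP => a; apply/implyP => nab; apply/eqP; apply: H.
Qed.

Lemma inLam_mul (A B : M) : inL A -> inL B -> inL (A *m B).
Proof.
move=> /inLamP hA /inLamP hB; apply/inLamP => b a nab; rewrite mxE big1 // => c _.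
case gcb: (ge c b); last by rewrite hA ?gcb // mul0r.
case gac: (ge a c); last by rewrite hB ?gac // mulr0.
by rewrite (ge_trans gac gcb) in nab.
Qed.

Lemma inLam0 : inL 0.
Proof. by apply/inLamP => b a _; rewrite mxE. Qed.

Lemma inLamD (A B : M) : inL A -> inL B -> inL (A + B).
Proof.
move=> /inLamP hA /inLamP hB; apply/inLamP => b a nab.
by rewrite mxE hA // hB // addr0.
Qed.

Lemma inLam_sum I (r : seq I) (F : I -> M) :
  (forall i, inL (F i)) -> inL (\sum_(i <- r) F i).
Proof. by move=> h; apply: (big_ind inL inLam0 inLamD) => i _; exact: h. Qed.

Lemma projQ_lam (A : M) : inL A -> pQ A = 0.
Proof.
move=> /inLamP h; apply/matrixP => b a; rewrite !mxE.
by case: ifP => // /negbT /h ->.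
Qed.

Lemma projQ_id (A : M) : pQ (pQ A) = pQ A.
Proof. by apply/matrixP => b a; rewrite !mxE; case: ifP => h; rewrite ?h. Qed.

Lemma inLam_residue (A : M) : inL (A - pQ A).
Proof.
apply/inLamP => b a nab; rewrite !mxE.
by case: ifP => h; [rewrite h in nab | rewrite subrr].
Qed.

Lemma projQ_mull (l A : M) : inL l -> pQ (l *m pQ A) = pQ (l *m A).
Proof.
move=> hl; have := projQ_lam (inLam_mul hl (inLam_residue A)).
by rewrite mulmxBr linearB => /eqP; rewrite subr_eq0 => /eqP.
Qed.

Lemma projQ_mulr (l A : M) : inL l -> pQ (pQ A *m l) = pQ (A *m l).
Proof.
move=> hl; have := projQ_lam (inLam_mul (inLam_residue A) hl).
by rewrite mulmxBl linearB => /eqP; rewrite subr_eq0 => /eqP.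
Qed.

Lemma actlD (l A B : M) : al l (A + B) = al l A + al l B.
Proof. by rewrite /actl mulmxDr linearD. Qed.

Lemma actlN (l A : M) : al l (- A) = - al l A.
Proof. by rewrite /actl mulmxN linearN. Qed.

Lemma actlB (l A B : M) : al l (A - B) = al l A - al l B.
Proof. by rewrite actlD actlN. Qed.

Lemma actlZ (l : M) a (A : M) : al l (a *: A) = a *: al l A.
Proof. by rewrite /actl -scalemxAr linearZ. Qed.

Lemma actl0 (l : M) : al l 0 = 0.
Proof. by rewrite /actl mulmx0 linear0. Qed.

Lemma actl_sumr (l : M) I (r : seq I) (F : I -> M) :
  al l (\sum_(i <- r) F i) = \sum_(i <- r) al l (F i).
Proof. by rewrite /actl mulmx_sumr linear_sum. Qed.

Lemma actl_mul (a b m : M) : inL a -> al a (al b m) = al (a *m b) m.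
Proof. by move=> ha; rewrite /actl projQ_mull // mulmxA. Qed.

Lemma actl_actr (a m x : M) : inL a -> inL x -> al a (ar m x) = ar (al a m) x.
Proof. by move=> ha hx; rewrite /actl /actr projQ_mull // projQ_mulr // mulmxA. Qed.

Lemma actl_suml I (r : seq I) (F : I -> M) (m : M) :
  al (\sum_(i <- r) F i) m = \sum_(i <- r) al (F i) m.
Proof. by rewrite /actl mulmx_suml linear_sum. Qed.

Lemma actrB (A B l : M) : ar (A - B) l = ar A l - ar B l.
Proof. by rewrite /actr mulmxBl linearB. Qed.

Lemma actr_suml I (r : seq I) (F : I -> M) (l : M) :
  ar (\sum_(i <- r) F i) l = \sum_(i <- r) ar (F i) l.
Proof. by rewrite /actr mulmx_suml linear_sum. Qed.

Definition E (c : 'I_n) : M := delta_mx c c.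

Lemma sum_E : \sum_(c : 'I_n) E c = 1%:M.
Proof. by rewrite mx1_sum_delta. Qed.

Lemma E_idem c : E c *m E c = E c.
Proof. by rewrite /E mul_delta_mx. Qed.

Lemma inLam_E c : inL (E c).
Proof.
apply/inLamP => b a nab; rewrite mxE.
by case: eqP => [eb|]; case: eqP => [ea|] //=; subst; rewrite ge_refl in nab.
Qed.

Lemma inLam_corner c x b : inL x -> inL (E c *m x *m E b).
Proof. by move=> hx; rewrite !inLam_mul ?inLam_E. Qed.

Lemma corner_entry a (X : M) c : E a *m X *m E c = X a c *: delta_mx a c.
Proof.
apply/matrixP => i j; rewrite /E !mxE (bigD1 c) //= big1 => [|k /negPf kc].
  rewrite addr0 !mxE eqxx /= (bigD1 a) //= big1 => [|k /negPf ka].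
    rewrite addr0 !mxE eqxx andbT.
    by case: eqP; case: eqP; rewrite /= ?mulr1 ?mul1r ?mul0r ?mulr0 // => -> ->.
  by rewrite !mxE ka andbF mul0r.
by rewrite !mxE kc mulr0.
Qed.

Lemma corner_lam0 a (X : M) c : inL X -> ~~ ge c a -> E a *m X *m E c = 0.
Proof. by move=> /inLamP hX h; rewrite corner_entry hX // scale0r. Qed.

(* ... while for c >= a the corner E_a N E_c of N = M_n(R)/Lambda vanishes.
   This is the only place where the shape of the quotient is used. *)
Lemma corner_vanishes a (m : M) c : ge c a -> al (E a) (ar m (E c)) = 0.
Proof.
move=> h; rewrite /actl /actr projQ_mull ?inLam_E // mulmxA projQ_lam //.
rewrite corner_entry; apply/inLamP => i j nji; rewrite !mxE.
by case: eqP => [ia|]; case: eqP => [jc|] /=; rewrite ?mulr0 //; subst; rewrite h in nji.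
Qed.

Definition multilinear (G : seq M -> M) (L : nat) : Prop :=
  forall s1 s2 (x y : M) (a : R),
    (size s1 + size s2).+1 = L -> all inL s1 -> all inL s2 -> inL x -> inL y ->
    G (s1 ++ (a *: x + y) :: s2) = a *: G (s1 ++ x :: s2) + G (s1 ++ y :: s2).

Lemma multilinear_cons G L y :
  multilinear G L.+1 -> inL y -> multilinear (fun zs => G (y :: zs)) L.
Proof.
move=> h hy s1 s2 x z a e h1 h2 hx hz.
by apply: (h (y :: s1) s2) => //=; rewrite ?addSn ?e ?hy.
Qed.

Lemma multilinear_zero G L s1 s2 : multilinear G L ->
  (size s1 + size s2).+1 = L -> all inL s1 -> all inL s2 ->
  G (s1 ++ 0 :: s2) = 0.
Proof.
move=> h e h1 h2; have := h s1 s2 0 0 1 e h1 h2 inLam0 inLam0.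
rewrite !scale1r addr0 => /(congr1 (fun t => t - G (s1 ++ 0 :: s2))).
by rewrite subrr addrK => <-.
Qed.

Lemma multilinear_sum G L s1 s2 (F : 'I_n -> M) : multilinear G L ->
  (size s1 + size s2).+1 = L -> all inL s1 -> all inL s2 ->
  (forall b, inL (F b)) ->
  G (s1 ++ (\sum_b F b) :: s2) = \sum_b G (s1 ++ F b :: s2).
Proof.
move=> h e h1 h2 hF; elim: (index_enum _) => [|b r IH].
  by rewrite !big_nil (multilinear_zero h).
rewrite !big_cons -IH -[F b]scale1r h ?scale1r //.
exact: inLam_sum.
Qed.

Lemma multilinear_split G L x xs : multilinear G L -> (size xs).+1 = L ->
  inL x -> all inL xs -> \sum_b G (x *m E b :: xs) = G (x :: xs).
Proof.
move=> h e hx hxs.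
rewrite -[in RHS](mulmx1 x) -sum_E mulmx_sumr (multilinear_sum (s1 := [::]) h) //.
by move=> b; rewrite inLam_mul ?inLam_E.
Qed.

Definition dpart (k : nat) (F : seq M -> M) (s : seq M) : M :=
  \sum_(j < k) (-1) ^+ j.+1 *: F (mergeAt j s)
  + (-1) ^+ k.+1 *: ar (F (take k s)) (nth 0 s k).

Lemma hdiff_split k F s :
  hdiff tl hd k F s = al (nth 0 s 0) (F (behead s)) + dpart k F s.
Proof. by rewrite /hdiff /dpart addrA. Qed.

Lemma dpart_cons k G y ys : dpart k.+1 G (y :: ys) =
  - G (y *m nth 0 ys 0 :: behead ys) - dpart k (fun zs => G (y :: zs)) ys.
Proof.
rewrite /dpart big_ord_recl /= /mergeAt /= drop1 expr1 scaleN1r.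
rewrite opprD -addrA; congr (_ + _).
rewrite -sumrN; congr (_ + _); last by rewrite exprS mulN1r scaleNr.
by apply: eq_bigr => j _; rewrite /bump leq0n add1n !add0n exprS mulN1r scaleNr.
Qed.

(* [dpart k] is linear in the cochain and commutes with the left action of
   the E_c (the last face involves a right action only). *)
Lemma dpart_sub_sum k A (F : 'I_n -> seq M -> M) s :
  dpart k (fun zs => A zs - \sum_b F b zs) s = dpart k A s - \sum_b dpart k (F b) s.
Proof.
rewrite /dpart actrB actr_suml.
rewrite (eq_bigr (fun j : 'I_k => (-1) ^+ j.+1 *: A (mergeAt j s)
   - \sum_b (-1) ^+ j.+1 *: F b (mergeAt j s))) => [|j _]; last first.
  by rewrite scalerBr scaler_sumr.
rewrite sumrB big_split /= exchange_big -scaler_sumr /=.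
by entrywise_ring.
Qed.

Lemma dpart_actl_sum k (F : 'I_n -> seq M -> M) s : inL (nth 0 s k) ->
  dpart k (fun zs => \sum_c al (E c) (F c zs)) s = \sum_c al (E c) (dpart k (F c) s).
Proof.
move=> hx; rewrite /dpart.
rewrite [in RHS](eq_bigr (fun c => \sum_(j < k) (-1) ^+ j.+1 *: al (E c) (F c (mergeAt j s))
   + (-1) ^+ k.+1 *: ar (al (E c) (F c (take k s))) (nth 0 s k))) => [|c _]; last first.
  rewrite actlD actl_sumr actlZ actl_actr ?inLam_E //; congr (_ + _).
  by apply: eq_bigr => j _; rewrite actlZ.
rewrite big_split /= exchange_big -scaler_sumr /= actr_suml.
by congr (_ + _); apply: eq_bigr => j _; rewrite scaler_sumr.
Qed.

(* For a cochain G, [htp xs G c] is the value at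
   xs of a cochain of one less arity: the alternating sum over j of
     G(E_c x1 E_b1, E_b1 x2 E_b2, ..., E_b(j-1) xj E_bj, E_bj, x(j+1), ...)
   summed over b1..bj (with b0 = c), obtained by normalizing the arguments
   one at a time. *)
Fixpoint htp (xs : seq M) (G : seq M -> M) (c : 'I_n) {struct xs} : M :=
  match xs with
  | [::] => G [:: E c]
  | x :: xs' => G (E c :: xs) -
      \sum_b htp xs' (fun zs => G (E c *m x *m E b :: zs)) b
  end.

(* The S-balanced part of G seen from the corner c:
     sum_{b1..bm} G(E_c x1 E_b1, ..., E_b(m-1) xm E_bm) . E_bm. *)
Fixpoint balanced (xs : seq M) (G : seq M -> M) (c : 'I_n) {struct xs} : M :=
  match xs with
  | [::] => ar (G [::]) (E c)
  | x :: xs' => \sum_b balanced xs' (fun zs => G (E c *m x *m E b :: zs)) b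
  end.

Lemma balanced_cons x xs G c : balanced (x :: xs) G c =
  \sum_b balanced xs (fun zs => G (E c *m x *m E b :: zs)) b.
Proof. by []. Qed.

Lemma htp_cons x xs G c : htp (x :: xs) G c =
  G (E c :: x :: xs) - \sum_b htp xs (fun zs => G (E c *m x *m E b :: zs)) b.
Proof. by []. Qed.

Lemma htp_resp xs G G' c : all inL xs ->
  (forall zs, size zs = (size xs).+1 -> all inL zs -> G zs = G' zs) ->
  htp xs G c = htp xs G' c.
Proof.
elim: xs G G' c => [|x xs IH] G G' c /=; first by move=> _ h; rewrite h //= inLam_E.
case/andP=> hx hxs h; rewrite h /= ?inLam_E ?hx ?hxs //; congr (_ - _).
apply: eq_bigr => b _; apply: IH => // zs hz hzs.
by apply: h; rewrite /= ?hz ?inLam_corner.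
Qed.

Lemma htp_ext xs G G' c : (forall zs, G zs = G' zs) -> htp xs G c = htp xs G' c.
Proof.
elim: xs G G' c => [|x xs IH] G G' c h //=; rewrite h; congr (_ - _).
by apply: eq_bigr => b _; apply: IH.
Qed.

Lemma balanced_resp xs G G' c : all inL xs ->
  (forall zs, size zs = size xs -> all inL zs -> G zs = G' zs) ->
  balanced xs G c = balanced xs G' c.
Proof.
elim: xs G G' c => [|x xs IH] G G' c /=; first by move=> _ h; rewrite h.
case/andP=> hx hxs h; apply: eq_bigr => b _; apply: IH => // zs hz hzs.
by apply: h; rewrite /= ?hz ?inLam_corner.
Qed.

Lemma htp_lin xs G1 G2 a c :
  htp xs (fun zs => a *: G1 zs + G2 zs) c = a *: htp xs G1 c + htp xs G2 c.
Proof.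
elim: xs G1 G2 c => [|x xs IH] G1 G2 c //=.
rewrite (eq_bigr (fun b => a *: htp xs (fun zs => G1 (E c *m x *m E b :: zs)) b
   + htp xs (fun zs => G2 (E c *m x *m E b :: zs)) b)) => [|b _]; last exact: IH.
by rewrite big_split /= -scaler_sumr scalerBr opprD addrACA.
Qed.

Lemma htp_opp xs G c : htp xs (fun zs => - G zs) c = - htp xs G c.
Proof.
elim: xs G c => [|x xs IH] G c //=.
rewrite (eq_bigr (fun b => - htp xs (fun zs => G (E c *m x *m E b :: zs)) b)) => [|b _].
  by rewrite sumrN opprB opprK addrC.
exact: IH.
Qed.

Lemma htp_sub xs G1 G2 c :
  htp xs (fun zs => G1 zs - G2 zs) c = htp xs G1 c - htp xs G2 c.
Proof.
rewrite (htp_ext _ (G' := fun zs => 1 *: G1 zs + - G2 zs)) => [|zs].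
  by rewrite htp_lin htp_opp scale1r.
by rewrite scale1r.
Qed.

Lemma htp_sum I (r : seq I) xs (F : I -> seq M -> M) c :
  htp xs (fun zs => \sum_(i <- r) F i zs) c = \sum_(i <- r) htp xs (F i) c.
Proof.
elim: r => [|i r IH].
  rewrite big_nil (htp_ext _ (G' := fun zs => 0 - 0)) => [|zs]; last by rewrite big_nil subr0.
  by rewrite htp_sub subrr.
rewrite big_cons -IH -[htp xs (F i) c]scale1r -htp_lin.
by apply: htp_ext => zs; rewrite big_cons scale1r.
Qed.

Lemma htp_actl (l : M) xs G c : htp xs (fun zs => al l (G zs)) c = al l (htp xs G c).
Proof.
elim: xs G c => [|x xs IH] G c //=.
rewrite actlB actl_sumr; congr (_ - _).
by apply: eq_bigr => b _; exact: IH.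
Qed.

Lemma multilinear_htp G L c : multilinear G L.+1 -> multilinear (fun xs => htp xs G c) L.
Proof.
move=> hG s1; elim: s1 G L c hG => [|z s1 IH] G L c hG s2 x y a e h1 h2 hx hy.
  rewrite /= (hG [:: E c] s2 x y a) /= ?inLam_E //; last by move: e => /=; lia.
  rewrite (eq_bigr (fun b => a *: htp s2 (fun zs => G (E c *m x *m E b :: zs)) b
     + htp s2 (fun zs => G (E c *m y *m E b :: zs)) b)) => [|b _]; last first.
    rewrite -htp_lin; apply: htp_resp => // zs hz hzs.
    rewrite mulmxDr mulmxDl -scalemxAr -scalemxAl.
    by apply: (hG [::] zs) => //; rewrite ?inLam_corner //= hz; move: e => /=; lia.
  by rewrite big_split -scaler_sumr /=; entrywise_ring.
case: L e hG => [|L] e hG; first by move: e => /=; lia.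
move: h1 => /= /andP [hz h1].
rewrite (hG [:: E c, z & s1] s2 x y a) /= ?inLam_E ?hz ?h1 //; last by move: e => /=; lia.
rewrite (eq_bigr (fun b => a *: htp (s1 ++ x :: s2) (fun zs => G (E c *m z *m E b :: zs)) b
     + htp (s1 ++ y :: s2) (fun zs => G (E c *m z *m E b :: zs)) b)) => [|b _]; last first.
  apply: (IH _ L b (multilinear_cons hG (inLam_corner c b hz))) => //; move: e => /=; lia.
by rewrite big_split -scaler_sumr /=; entrywise_ring.
Qed.

Lemma balanced_zero xs c : balanced xs (fun _ => 0) c = 0.
Proof.
elim: xs c => [|x xs IH] c /=; last by rewrite big1.
by rewrite /actr mul0mx linear0.
Qed.

(* The S-balanced part of a multilinear map vanishes in the corners E_a N
   with c >= a: along nonzero terms b_m >= ... >= b_1 >= c >= a. *)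
Lemma balanced_vanishes xs G c a : all inL xs -> multilinear G (size xs) -> ge c a ->
  al (E a) (balanced xs G c) = 0.
Proof.
elim: xs G c => [|x xs IH] G c /=; first by move=> _ _; exact: corner_vanishes.
case/andP=> hx hxs hG hca; rewrite actl_sumr big1 // => b _.
have [hbc|hbc] := boolP (ge b c).
  apply: IH hxs _ (ge_trans hbc hca).
  exact: multilinear_cons hG (inLam_corner c b hx).
rewrite corner_lam0 // (balanced_resp (G' := fun _ => 0) _ hxs) => [|zs hz hzs].
  by rewrite balanced_zero actl0.
by apply: (multilinear_zero (s1 := [::]) hG) => //=; rewrite hz.
Qed.

Lemma homotopy_identity0 G c x : inL x -> multilinear G 1 ->
  dpart 0 (fun zs => htp zs G c) [:: x] + htp [:: x] (dpart 1 G) c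
  = - balanced [:: x] G c.
Proof.
move=> hx hG.
have split1 : \sum_b G [:: E c *m x *m E b *m E b] = G [:: E c *m x].
  under eq_bigr => b _ do rewrite -mulmxA E_idem.
  by rewrite (multilinear_split hG) ?inLam_mul ?inLam_E.
rewrite htp_cons /= /dpart !big_ord0 !big_ord1 /mergeAt /=.
under eq_bigr => b _ do rewrite big_ord1 /=.
rewrite big_split /= -scaler_sumr split1 -scaler_sumr.
by entrywise_ring.
Qed.

Lemma htp_dpart_cons k G c x y ys :
  htp [:: x, y & ys] (dpart k.+2 G) c =
    - G [:: E c *m x, y & ys] + G [:: E c, x *m y & ys]
    + dpart k (fun zs => G [:: E c, x & zs]) (y :: ys)
    + \sum_b htp (y :: ys) (fun ws => G (E c *m x *m E b *m nth 0 ws 0 :: behead ws)) b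
    + \sum_b htp (y :: ys) (dpart k.+1 (fun zs => G (E c *m x *m E b :: zs))) b.
Proof.
rewrite htp_cons !dpart_cons; cbn [nth behead].
under eq_bigr => b _.
  rewrite (htp_ext _ (G' := fun ws =>
    - G (E c *m x *m E b *m nth 0 ws 0 :: behead ws)
    - dpart k.+1 (fun zs => G (E c *m x *m E b :: zs)) ws)); last exact: dpart_cons.
  rewrite htp_sub htp_opp.
  over.
by rewrite sumrB sumrN; entrywise_ring.
Qed.

(* Merging E_b into the first argument and summing over b recovers G; this
   uses only multilinearity and 1 = sum_b E_b. *)
Lemma htp_merge_first G z y ys :
  multilinear G (size ys).+2 -> inL z -> inL y -> all inL ys ->
  \sum_b htp (y :: ys) (fun ws => G (z *m E b *m nth 0 ws 0 :: behead ws)) b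
  = G [:: z, y & ys] - \sum_b htp ys (fun ws => G (z *m y *m E b :: ws)) b.
Proof.
move=> hG hz hy hys; under eq_bigr => b _ do rewrite htp_cons /=.
rewrite sumrB; congr (_ - _).
  under eq_bigr => b _ do rewrite -mulmxA E_idem.
  by rewrite (multilinear_split hG) //= hy.
rewrite exchange_big /=; apply: eq_bigr => b' _.
rewrite -htp_sum; apply: htp_resp => // zs hz1 hzs.
rewrite (eq_bigr (fun b => G ([::] ++ z *m E b *m (y *m E b') :: zs))) => [|b _]; last first.
  by rewrite /= !mulmxA -(mulmxA _ (E b) (E b)) E_idem.
rewrite -(multilinear_sum hG) //=; last by move=> b; rewrite !inLam_mul ?inLam_E.
  by rewrite -mulmx_suml -mulmx_sumr sum_E mulmx1 mulmxA.
by rewrite hz1.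
Qed.

Lemma homotopy_identity k xs G c :
  size xs = k.+1 -> all inL xs -> multilinear G k.+1 ->
  dpart k (fun zs => htp zs G c) xs + htp xs (dpart k.+1 G) c = - balanced xs G c.
Proof.
elim: k xs G c => [|k IH] xs G c.
  by case: xs => [|x [|? ?]] // _ /andP [hx _]; exact: homotopy_identity0.
case: xs => [|x [|y ys]] // Hs /and3P [hx hy hys] hG.
have hsize : size ys = k by move: Hs => /=; lia.
have hb b : inL (E c *m x *m E b) by exact: inLam_corner.
have IHb b : balanced (y :: ys) (fun zs => G (E c *m x *m E b :: zs)) b =
    - (dpart k (fun zs => htp zs (fun ws => G (E c *m x *m E b :: ws)) b) (y :: ys)
       + htp (y :: ys) (dpart k.+1 (fun zs => G (E c *m x *m E b :: zs))) b).
  by rewrite IH ?opprK //= ?hy ?hsize //; exact: multilinear_cons hG (hb b).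
have htp_xy : htp (x *m y :: ys) G c =
    G [:: E c, x *m y & ys] - \sum_b htp ys (fun ws => G (E c *m x *m y *m E b :: ws)) b.
  rewrite htp_cons; congr (_ - _); apply: eq_bigr => b _.
  by apply: htp_ext => ws; rewrite mulmxA.
have first_faces : dpart k (fun zs => htp (x :: zs) G c) (y :: ys) =
    dpart k (fun zs => G [:: E c, x & zs]) (y :: ys)
    - \sum_b dpart k (fun zs => htp zs (fun ws => G (E c *m x *m E b :: ws)) b) (y :: ys).
  exact: dpart_sub_sum.
rewrite dpart_cons; cbn [nth behead].
rewrite first_faces htp_dpart_cons htp_xy balanced_cons (eq_bigr _ (fun b _ => IHb b)).
rewrite htp_merge_first ?inLam_mul ?inLam_E ?hsize //.
rewrite sumrN opprK [in RHS]big_split.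
by entrywise_ring.
Qed.

Lemma htp_left F x ys c :
  htp (x :: ys) (fun zs => al (nth 0 zs 0) (F (behead zs))) c =
  al (E c) (F (x :: ys)) - \sum_b al (E c *m x *m E b) (htp ys F b).
Proof.
rewrite htp_cons; congr (_ - _); apply: eq_bigr => b _.
by rewrite -htp_actl; apply: htp_ext.
Qed.

Definition hcochain (f : seq M -> M) : seq M -> M :=
  fun ys => \sum_c al (E c) (htp ys f c).

Lemma hcochain_cochain k f : multilinear f k.+1 -> cochain tl hd k (hcochain f).
Proof.
move=> hf; split.
  move=> s _ _; apply/eqP; rewrite /hcochain linear_sum.
  by apply: eq_bigr => c _; exact: projQ_id.
move=> s1 s2 x y a e h1 h2 hx hy; rewrite /hcochain scaler_sumr -big_split /=.
apply: eq_bigr => c _.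
by rewrite -actlZ -actlD (multilinear_htp c hf).
Qed.

Lemma cocycle_is_coboundary k f : cochain tl hd k.+1 f -> cocycle tl hd k.+1 f ->
  forall s, size s = k.+1 -> all inL s -> f s = hdiff tl hd k (hcochain f) s.
Proof.
move=> [hQ hf] hcoc [|x ys] // hs hsL.
have [hx hys] : inL x /\ all inL ys by apply/andP.
have hk : inL (nth 0 (x :: ys) k) by apply: (all_nthP 0 hsL); rewrite hs.
have cocycle_htp c : htp (x :: ys) (dpart k.+1 f) c =
    - (al (E c) (f (x :: ys)) - \sum_b al (E c *m x *m E b) (htp ys f b)).
  rewrite -htp_left -htp_opp; apply: htp_resp => // zs hz hzs.
  have := hcoc zs (etrans hz (congr1 S hs)) hzs.
  by rewrite hdiff_split => /eqP; rewrite addrC addr_eq0 => /eqP.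
have corner c : al (E c) (dpart k (fun zs => htp zs f c) (x :: ys)) =
    al (E c) (f (x :: ys)) - \sum_b al (E c *m x *m E b) (htp ys f b).
  have := homotopy_identity c hs hsL hf.
  move=> /(congr1 (fun t => al (E c) (t - htp (x :: ys) (dpart k.+1 f) c))).
  rewrite addrK => ->; rewrite cocycle_htp opprK actlD actlN.
  rewrite balanced_vanishes ?hs ?ge_refl // oppr0 add0r actlB actl_sumr.
  rewrite actl_mul ?inLam_E // E_idem; congr (_ - _); apply: eq_bigr => b _.
  by rewrite actl_mul ?inLam_E // !mulmxA E_idem.
rewrite hdiff_split (dpart_actl_sum (fun c zs => htp zs f c)) //.
under eq_bigr => c _ do rewrite corner.
have sum_left : \sum_c al (E c) (f (x :: ys)) = f (x :: ys).
  rewrite -actl_suml sum_E /actl mul1mx; exact/eqP/hQ.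
have sum_corners :
    \sum_c \sum_b al (E c *m x *m E b) (htp ys f b) = al x (hcochain f ys).
  rewrite /hcochain actl_sumr exchange_big /=; apply: eq_bigr => b _.
  rewrite actl_mul ?inLam_E // -actl_suml.
  by congr (al _ _); rewrite -!mulmx_suml sum_E mul1mx.
by rewrite sumrB sum_left sum_corners; cbn [nth behead]; rewrite addrC subrK.
Qed.

(* Degree zero: a 0-cocycle m commutes with every E_c, so each corner
   E_c m = E_c m E_c is diagonal and vanishes in the quotient. *)
Lemma HH0_vanishes : HH_vanishes R tl hd 0.
Proof.
move=> f [hQ _] hcoc s /size0nil ->.
have hm : pQ (f [::]) = f [::] by apply/eqP; exact: hQ [::] erefl isT.
rewrite -hm -[f [::]]mul1mx -sum_E mulmx_suml linear_sum big1 // => c _.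
have hc := hcoc [:: E c] erefl (etrans (andbT _) (inLam_E c)).
rewrite hdiff_split /dpart big_ord0 add0r /= expr1 scaleN1r in hc.
have commute : al (E c) (f [::]) = ar (f [::]) (E c).
  by move/eqP: hc; rewrite subr_eq0 => /eqP.
transitivity (al (E c) (al (E c) (f [::]))); first by rewrite actl_mul ?inLam_E // E_idem.
by rewrite commute corner_vanishes ?ge_refl.
Qed.

End IncidenceAlgebra.

Theorem theorem4p5 (R : comPzRingType) (n : nat) (Ar : finType)
  (tl hd : Ar -> 'I_n) :
  ordered_quiver tl hd ->
  forall i : nat, HH_vanishes R tl hd i.
Proof.
move=> _ [|k]; first exact: HH0_vanishes.
move=> f hf hcoc; exists (hcochain tl hd f); split.
  exact: hcochain_cochain (proj2 hf).
exact: cocycle_is_coboundary.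
Qed.
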